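(* Let $k\ge 1$ and $1\le m\le k$ be integers, and let $-\infty\le\alpha<\beta\le+\infty$. Let $M, G, \widetilde F:(\alpha,\beta)\to\mathbb{R}$ be $C^k$ functions, and let $\mathbb{S}$ denote the set of zeros of $G$ in $(\alpha,\beta)$. Suppose that $$\left(\frac{M(h)}{G(h)}\right)^{(m)}=\frac{\widetilde F(h)}{G^{m+1}(h)}\qquad\text{for all } h\in(\alpha,\beta)\setminus\mathbb{S}.$$ Assume that $\widetilde F$ and $G$ have finitely many zeros in $(\alpha,\beta)$, and that every zero of $M$, $G$ and $\widetilde F$ in $(\alpha,\beta)$ has multiplicity at most $k$. Let $\lambda,\mu,p$ denote the number of zeros of $M$, $\widetilde F$, $G$ in $(\alpha,\beta)$ respectively, counted with multiplicity. Then $$\lambda\le \mu+mp+m.$$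
   Context: A zero $h_0$ of a $C^k$ function $f$ has multiplicity $l$ ($1\le l\le k$) if $f(h_0)=f'(h_0)=\dots=f^{(l-1)}(h_0)=0$ and $f^{(l)}(h_0)\neq 0$. Numbers of zeros ''counted with multiplicity'' are sums of these multiplicities. *)

From Stdlib Require Import Reals Lra List ClassicalEpsilon.
From Coquelicot Require Import Coquelicot.
Open Scope R_scope.

Definition in_open (a b : Rbar) (x : R) : Prop := Rbar_lt a x /\ Rbar_lt x b.

Definition Ck_on (k : nat) (a b : Rbar) (f : R -> R) : Prop :=
  forall x, in_open a b x ->
    (forall j, (j <= k)%nat -> ex_derive_n f j x) /\
    continuous (Derive_n f k) x.

Definition is_mult (f : R -> R) (x0 : R) (l : nat) : Prop :=
  (1 <= l)%nat /\
  (forall j, (j < l)%nat -> Derive_n f j x0 = 0) /\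
  Derive_n f l x0 <> 0.

(* The multiplicity of the zero x0 of f (meaningful when it exists;
   it is then unique). *)
Definition mult (f : R -> R) (x0 : R) : nat :=
  epsilon (inhabits 0%nat) (fun l => is_mult f x0 l).

Definition sum_mult (f : R -> R) (Z : list R) : nat :=
  fold_right (fun x acc => (mult f x + acc)%nat) 0%nat Z.

(* Put Q_0 = M and Q_(i+1) = G Q_i' - (i+1) G' Q_i (this is [qnum M G i]), so that
   (M/G)^(i) = Q_i / G^(i+1) where G <> 0, and Ft = Q_m there.  On an interval free of
   zeros of G, Rolle's theorem for Q_i / G^(i+1) places a zero of Q_(i+1) between
   consecutive zeros of Q_i, while a zero of Q_i of order t >= 2 remains a zero of
   Q_(i+1) of order t - 1; each step loses at most one zero counted with multiplicity,
   so M has at most m more zeros there than Ft.  At a zero g of G, every Q_i is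
   O(|x - g|^s) where s is the order of M at g, and since Ft = Q_m just to the right of
   g, Ft vanishes at g to order at least s.  The zeros of G cut (alpha, beta) into at
   most p + 1 intervals free of zeros of G, whence lambda <= mu + m p + m. *)

From Pilot Require Import Defs.
From Stdlib Require Import Reals Lra Lia List Permutation Sorted ClassicalEpsilon
  FunctionalExtensionality.
From Coquelicot Require Import Coquelicot.
(* Re-imported so that [mult] means Defs.mult rather than Coquelicot's ring product. *)
Import Defs.
Open Scope R_scope.

(** * Differentiability classes on an open interval *)

Lemma Derive_n_S_Derive (f : R -> R) (n : nat) :
  Derive_n f (S n) = Derive_n (Derive f) n.
Proof.
  induction n as [|n IH]; apply functional_extensionality; intro x; simpl.
  - apply Derive_ext; reflexivity.
  - simpl in IH; rewrite IH; reflexivity.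
Qed.

Lemma continuous_eps_delta (f : R -> R) (x : R) : continuous f x ->
  forall eps, 0 < eps ->
  exists d, 0 < d /\ forall y, Rabs (y - x) < d -> Rabs (f y - f x) < eps.
Proof.
  intros Hf eps Heps.
  destruct (proj1 (filterlim_locally f (f x)) Hf (mkposreal eps Heps)) as [d Hd].
  exists d; split; [apply cond_pos | intros y Hy; apply (Hd y), Hy].
Qed.

Lemma ex_derive_continuity_pt (f : R -> R) (x : R) : ex_derive f x -> continuity_pt f x.
Proof.
  intros H. apply continuity_pt_filterlim.
  apply (@ex_derive_continuous R_AbsRing R_NormedModule f x), H.
Qed.

Lemma in_open_ball (a b : Rbar) (x : R) : in_open a b x ->
  exists d, 0 < d /\ forall y, Rabs (y - x) < d -> in_open a b y.
Proof.
  intros [H1 H2]. destruct (Rbar_lt_locally a b x H1 H2) as [d Hd].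
  exists d; split; [apply cond_pos | intros y Hy; split; apply (Hd y Hy)].
Qed.

Lemma in_open_locally (a b : Rbar) (x : R) : in_open a b x -> locally x (in_open a b).
Proof.
  intros [H1 H2]. apply (locally_interval _ x a b H1 H2). now split.
Qed.

Lemma in_open_between (a b : Rbar) (z z2 y : R) : in_open a b z -> in_open a b z2 ->
  z <= y <= z2 -> in_open a b y.
Proof. unfold in_open. destruct a, b; simpl; intros; lra. Qed.

Lemma in_open_split (a b : Rbar) (g x : R) : in_open a b g ->
  (in_open a b x <-> in_open a g x \/ x = g \/ in_open g b x).
Proof.
  unfold in_open. intros Hg.
  destruct (Rtotal_order x g) as [H|[H|H]]; destruct a, b; simpl in *;
  split; intros; try tauto; try (left; lra); try (right; left; lra);
  try (right; right; lra); intuition lra.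
Qed.

Section Cn.

Variables a b : Rbar.

Fixpoint Cn (n : nat) (f : R -> R) : Prop :=
  match n with
  | O => forall x, in_open a b x -> continuous f x
  | S n' => (forall x, in_open a b x -> ex_derive f x) /\ Cn n' (Derive f)
  end.

Lemma locally_eq_in_open (f g : R -> R) (x : R) :
  (forall y, in_open a b y -> f y = g y) -> in_open a b x -> locally x (fun t => f t = g t).
Proof. intros H Hx. apply (filter_imp _ _ H), in_open_locally, Hx. Qed.

Lemma Cn_ext (n : nat) : forall f g : R -> R,
  (forall x, in_open a b x -> f x = g x) -> Cn n f -> Cn n g.
Proof.
  induction n as [|n IH]; intros f g Hfg Hf; simpl in *.
  - intros x Hx. apply (continuous_ext_loc g f x).
    + apply (locally_eq_in_open f g x Hfg Hx).
    + apply Hf, Hx.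
  - destruct Hf as [Hd Hf]. split.
    + intros x Hx. apply (ex_derive_ext_loc f g x (locally_eq_in_open f g x Hfg Hx)), Hd, Hx.
    + apply (IH (Derive f)); auto. intros x Hx.
      apply Derive_ext_loc, (locally_eq_in_open f g x Hfg Hx).
Qed.

Lemma Cn_continuous (n : nat) (f : R -> R) :
  Cn n f -> forall x, in_open a b x -> continuous f x.
Proof.
  destruct n; simpl; intros H x Hx; [apply H, Hx|].
  apply (@ex_derive_continuous R_AbsRing R_NormedModule f x), (proj1 H), Hx.
Qed.

Lemma Cn_ex_derive (n : nat) (f : R -> R) :
  Cn (S n) f -> forall x, in_open a b x -> ex_derive f x.
Proof. intros [H _]; exact H. Qed.

Lemma Cn_Derive (n : nat) (f : R -> R) : Cn (S n) f -> Cn n (Derive f).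
Proof. intros [_ H]; exact H. Qed.

Lemma Cn_S (n : nat) : forall f, Cn (S n) f -> Cn n f.
Proof.
  induction n as [|n IH]; intros f H.
  - intros x Hx. apply (Cn_continuous 1 f H x Hx).
  - destruct H as [Hd H]. split; auto.
Qed.

Lemma Cn_le (n n' : nat) (f : R -> R) : (n <= n')%nat -> Cn n' f -> Cn n f.
Proof. induction 1 as [|n' _ IH]; auto. intros Hf; apply IH, Cn_S, Hf. Qed.

Lemma Cn_const (n : nat) (c : R) : Cn n (fun _ => c).
Proof.
  revert c. induction n as [|n IH]; intros c; simpl.
  - intros; apply continuous_const.
  - split; [intros; apply ex_derive_const|].
    apply (Cn_ext n (fun _ => 0)); [|apply IH].
    intros x _. rewrite Derive_const. reflexivity.
Qed.

Lemma Cn_plus (n : nat) : forall f g,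
  Cn n f -> Cn n g -> Cn n (fun x => f x + g x).
Proof.
  induction n as [|n IH]; intros f g Hf Hg; simpl in *.
  - intros x Hx. apply (continuous_plus f g x); auto.
  - destruct Hf as [Hf1 Hf2], Hg as [Hg1 Hg2]. split.
    + intros x Hx. apply (ex_derive_plus f g x); auto.
    + apply (Cn_ext n (fun x => Derive f x + Derive g x)); [|apply IH; auto].
      intros x Hx. rewrite Derive_plus; auto.
Qed.

Lemma Cn_mult (n : nat) : forall f g,
  Cn n f -> Cn n g -> Cn n (fun x => f x * g x).
Proof.
  induction n as [|n IH]; intros f g Hf Hg.
  - simpl in *. intros x Hx. apply (continuous_mult f g x); auto.
  - pose proof (Cn_S n f Hf) as Hf'. pose proof (Cn_S n g Hg) as Hg'.
    destruct Hf as [Hf1 Hf2], Hg as [Hg1 Hg2]. split.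
    + intros x Hx. apply (ex_derive_mult f g x); auto.
    + apply (Cn_ext n (fun x => Derive f x * g x + f x * Derive g x)).
      * intros x Hx. rewrite Derive_mult; auto.
      * apply Cn_plus; apply IH; auto.
Qed.

Lemma Cn_scal (n : nat) (c : R) f : Cn n f -> Cn n (fun x => c * f x).
Proof. intros H. apply (Cn_mult n (fun _ => c) f); auto. apply Cn_const. Qed.

Lemma Cn_minus (n : nat) f g : Cn n f -> Cn n g -> Cn n (fun x => f x - g x).
Proof.
  intros Hf Hg. apply (Cn_ext n (fun x => f x + (-1) * g x)); [intros; ring|].
  apply Cn_plus, Cn_scal; auto.
Qed.

Lemma Ck_on_Cn (k : nat) (f : R -> R) : Ck_on k a b f -> Cn k f.
Proof.
  intros H.
  assert (A : forall d j, (j + d = k)%nat -> Cn d (Derive_n f j)).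
  { induction d as [|d IH]; intros j Hj.
    - intros x Hx. replace j with k by lia. apply (proj2 (H x Hx)).
    - split; [intros x Hx; apply (proj1 (H x Hx) (S j)); lia | apply (IH (S j)); lia]. }
  apply (A k 0%nat); lia.
Qed.

End Cn.

(** * Vanishing orders and local estimates *)

Lemma pow_le_compat_le_1 (r : R) (m n : nat) : 0 <= r <= 1 -> (m <= n)%nat -> r ^ n <= r ^ m.
Proof.
  intros Hr. induction 1 as [|n _ IH]; [lra|]. simpl.
  apply Rle_trans with (1 * r ^ n); [|lra].
  apply Rmult_le_compat_r; [apply pow_le|]; lra.
Qed.

Lemma Rabs_between (g x c : R) : Rmin g x <= c <= Rmax g x -> Rabs (c - g) <= Rabs (x - g).
Proof.
  unfold Rmin, Rmax. destruct (Rle_dec g x); intros [H1 H2];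
  unfold Rabs; destruct (Rcase_abs (c - g)), (Rcase_abs (x - g)); lra.
Qed.

Lemma pow_not_bigO_higher_pow (e C d : R) (q s : nat) : 0 < e -> 0 < d -> (q < s)%nat ->
  ~ (forall x, 0 < x < d -> e * x ^ q <= C * x ^ s).
Proof.
  intros He Hd Hqs H.
  set (x := Rmin d (Rmin 1 (e / (Rabs C + 1))) / 2).
  assert (HC : 0 <= Rabs C) by apply Rabs_pos.
  assert (Hr : 0 < e / (Rabs C + 1)) by (apply Rdiv_lt_0_compat; lra).
  pose proof (Rmin_l d (Rmin 1 (e / (Rabs C + 1)))) as Hm1.
  pose proof (Rmin_r d (Rmin 1 (e / (Rabs C + 1)))) as Hm2.
  pose proof (Rmin_l 1 (e / (Rabs C + 1))) as Hm3.
  pose proof (Rmin_r 1 (e / (Rabs C + 1))) as Hm4.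
  assert (0 < Rmin d (Rmin 1 (e / (Rabs C + 1)))) by (repeat apply Rmin_pos; lra).
  assert (Hx : 0 < x) by (unfold x; lra).
  assert (Hx1 : x < 1) by (unfold x; lra).
  assert (Hxe : x * (Rabs C + 1) < e).
  { apply Rlt_le_trans with (e / (Rabs C + 1) * (Rabs C + 1)).
    - apply Rmult_lt_compat_r; [lra | unfold x; lra].
    - right; field; lra. }
  assert (Hxq : 0 < x ^ q) by (apply pow_lt; lra).
  assert (Hs : C * x ^ s <= Rabs C * x * x ^ q).
  { apply Rle_trans with (Rabs C * x ^ s).
    - apply Rmult_le_compat_r; [apply pow_le; lra | apply Rle_abs].
    - rewrite Rmult_assoc; change (x * x ^ q) with (x ^ S q).
      apply Rmult_le_compat_l; [lra | apply pow_le_compat_le_1; lra || lia]. }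
  assert (e * x ^ q <= Rabs C * x * x ^ q) by (apply Rle_trans with (2 := Hs), H; unfold x; lra).
  assert (e <= Rabs C * x) by (apply Rmult_le_reg_r with (x ^ q); auto; lra).
  nra.
Qed.

Lemma is_derive_nonneg_le (h h' : R -> R) (g x : R) : g <= x ->
  (forall y, g <= y <= x -> is_derive h y (h' y)) -> (forall y, g <= y <= x -> 0 <= h' y) ->
  h g <= h x.
Proof.
  intros Hgx Hd Hpos. destruct (Req_dec g x) as [<-|Hne]; [lra|].
  destruct (MVT_gen h g x h') as [c [Hc Hhc]];
    try rewrite Rmin_left, Rmax_right in * by lra.
  - intros y Hy. apply Hd; lra.
  - intros y Hy. apply ex_derive_continuity_pt. exists (h' y). apply Hd, Hy.
  - assert (0 <= h' c * (x - g)) by (apply Rmult_le_pos; [apply Hpos|]; lra). lra.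
Qed.

Definition bigO_at (f : R -> R) (g : R) (s : nat) : Prop :=
  exists d, 0 < d /\ exists C, forall x, Rabs (x - g) < d -> Rabs (f x) <= C * Rabs (x - g) ^ s.

Lemma bigO_at_le (f : R -> R) (g : R) (s s' : nat) : (s' <= s)%nat ->
  bigO_at f g s -> bigO_at f g s'.
Proof.
  intros Hs [d [Hd [C HC]]]. exists (Rmin d 1); split; [apply Rmin_pos; lra|].
  exists (Rabs C). intros x Hx.
  pose proof (Rmin_l d 1). pose proof (Rmin_r d 1).
  apply Rle_trans with (1 := HC x ltac:(lra)).
  apply Rle_trans with (Rabs C * Rabs (x - g) ^ s).
  - apply Rmult_le_compat_r; [apply pow_le, Rabs_pos | apply Rle_abs].
  - apply Rmult_le_compat_l; [apply Rabs_pos|].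
    apply pow_le_compat_le_1; auto. split; [apply Rabs_pos | lra].
Qed.

Lemma bigO_at_plus (f h : R -> R) (g : R) (s : nat) : bigO_at f g s -> bigO_at h g s ->
  bigO_at (fun x => f x + h x) g s.
Proof.
  intros [d1 [Hd1 [C1 HC1]]] [d2 [Hd2 [C2 HC2]]].
  exists (Rmin d1 d2); split; [apply Rmin_pos; lra|].
  exists (Rabs C1 + Rabs C2). intros x Hx.
  pose proof (Rmin_l d1 d2). pose proof (Rmin_r d1 d2).
  specialize (HC1 x ltac:(lra)). specialize (HC2 x ltac:(lra)).
  assert (P : 0 <= Rabs (x - g) ^ s) by (apply pow_le, Rabs_pos).
  apply Rle_trans with (1 := Rabs_triang (f x) (h x)).
  assert (C1 * Rabs (x - g) ^ s <= Rabs C1 * Rabs (x - g) ^ s)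
    by (apply Rmult_le_compat_r; auto; apply Rle_abs).
  assert (C2 * Rabs (x - g) ^ s <= Rabs C2 * Rabs (x - g) ^ s)
    by (apply Rmult_le_compat_r; auto; apply Rle_abs).
  lra.
Qed.

Lemma bigO_at_mult (f h : R -> R) (g : R) (s t : nat) : bigO_at f g s -> bigO_at h g t ->
  bigO_at (fun x => f x * h x) g (s + t).
Proof.
  intros [d1 [Hd1 [C1 HC1]]] [d2 [Hd2 [C2 HC2]]].
  exists (Rmin d1 d2); split; [apply Rmin_pos; lra|].
  exists (Rabs C1 * Rabs C2). intros x Hx.
  pose proof (Rmin_l d1 d2). pose proof (Rmin_r d1 d2).
  specialize (HC1 x ltac:(lra)). specialize (HC2 x ltac:(lra)).
  assert (P : 0 <= Rabs (x - g) ^ s) by (apply pow_le, Rabs_pos).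
  assert (P' : 0 <= Rabs (x - g) ^ t) by (apply pow_le, Rabs_pos).
  rewrite Rabs_mult, pow_add.
  assert (A1 : Rabs (f x) <= Rabs C1 * Rabs (x - g) ^ s).
  { apply Rle_trans with (1 := HC1). apply Rmult_le_compat_r; auto; apply Rle_abs. }
  assert (A2 : Rabs (h x) <= Rabs C2 * Rabs (x - g) ^ t).
  { apply Rle_trans with (1 := HC2). apply Rmult_le_compat_r; auto; apply Rle_abs. }
  apply Rle_trans with ((Rabs C1 * Rabs (x - g) ^ s) * (Rabs C2 * Rabs (x - g) ^ t)).
  - apply Rmult_le_compat; auto; apply Rabs_pos.
  - right; ring.
Qed.

Section VanishingOrder.

Variables (a b : Rbar) (g : R).
Hypothesis Hg : in_open a b g.

Lemma bigO_at_ext (f h : R -> R) (s : nat) :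
  (forall x, in_open a b x -> f x = h x) -> bigO_at f g s -> bigO_at h g s.
Proof.
  intros Hfh [d1 [Hd1 [C1 HC1]]].
  destruct (in_open_ball a b g Hg) as [d2 [Hd2 Hd2']].
  exists (Rmin d1 d2); split; [apply Rmin_pos; lra|]. exists C1. intros x Hx.
  pose proof (Rmin_l d1 d2). pose proof (Rmin_r d1 d2).
  rewrite <- Hfh; [apply HC1 | apply Hd2']; lra.
Qed.

(* Mean value theorem, one derivative at a time. *)
Lemma bigO_at_of_derivs_vanish (t : nat) : forall n f, Cn a b n f -> (t <= n)%nat ->
  (forall j, (j < t)%nat -> Derive_n f j g = 0) -> bigO_at f g t.
Proof.
  induction t as [|t IH]; intros n f Hf Htn Hj.
  - destruct (continuous_eps_delta f g (Cn_continuous a b n f Hf g Hg) 1 Rlt_0_1)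
      as [d [Hd Hd']].
    exists d; split; auto. exists (Rabs (f g) + 1). intros x Hx.
    specialize (Hd' x Hx). simpl. rewrite Rmult_1_r.
    generalize (Rabs_triang_inv (f x) (f g)). lra.
  - destruct n as [|n]; [lia|].
    assert (HD : bigO_at (Derive f) g t).
    { apply (IH n); [apply Cn_Derive, Hf | lia |].
      intros j Hjt. rewrite <- Derive_n_S_Derive. apply Hj. lia. }
    destruct HD as [d1 [Hd1 [C1 HC1]]].
    destruct (in_open_ball a b g Hg) as [d2 [Hd2 Hd2']].
    exists (Rmin d1 d2); split; [apply Rmin_pos; auto|].
    exists (Rabs C1). intros x Hx.
    pose proof (Rmin_l d1 d2). pose proof (Rmin_r d1 d2).
    assert (Hin : forall y, Rmin g x <= y <= Rmax g x -> in_open a b y /\ Rabs (y - g) < d1).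
    { intros y Hy. pose proof (Rabs_between g x y Hy). split; [apply Hd2'|]; lra. }
    destruct (MVT_gen f g x (Derive f)) as [c [Hc Hfc]].
    + intros y Hy. apply Derive_correct, (Cn_ex_derive a b n f Hf), Hin; lra.
    + intros y Hy. apply ex_derive_continuity_pt, (Cn_ex_derive a b n f Hf), Hin; lra.
    + assert (Hf0 : f g = 0) by (apply (Hj 0%nat); lia).
      rewrite Hf0, Rminus_0_r in Hfc. rewrite Hfc, Rabs_mult.
      specialize (HC1 c (proj2 (Hin c Hc))).
      pose proof (Rabs_between g x c Hc) as Hcx.
      simpl. apply Rle_trans with (Rabs C1 * Rabs (x - g) ^ t * Rabs (x - g)); [|right; ring].
      apply Rmult_le_compat_r; [apply Rabs_pos|].
      apply Rle_trans with (1 := HC1).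
      apply Rle_trans with (Rabs C1 * Rabs (c - g) ^ t).
      * apply Rmult_le_compat_r; [apply pow_le, Rabs_pos | apply Rle_abs].
      * apply Rmult_le_compat_l; [apply Rabs_pos | apply pow_incr; split; auto; apply Rabs_pos].
Qed.

Lemma right_lower_bound_of_order (q : nat) : forall n f, Cn a b n f -> (q <= n)%nat ->
  (forall j, (j < q)%nat -> Derive_n f j g = 0) -> 0 < Derive_n f q g ->
  exists e, 0 < e /\ exists d, 0 < d /\ forall x, g <= x < g + d -> e * (x - g) ^ q <= f x.
Proof.
  induction q as [|q IH]; intros n f Hf Hqn Hj Hpos.
  - simpl in Hpos.
    destruct (continuous_eps_delta f g (Cn_continuous a b n f Hf g Hg) (f g / 2))
      as [d [Hd Hd']]; [lra|].
    exists (f g / 2); split; [lra|]. exists d; split; auto. intros x Hx.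
    assert (Hfx : Rabs (f x - f g) < f g / 2) by (apply Hd'; rewrite Rabs_right; lra).
    apply Rabs_def2 in Hfx. simpl. lra.
  - destruct n as [|n]; [lia|].
    destruct (IH n (Derive f)) as [e1 [He1 [d1 [Hd1 H1]]]];
      [apply Cn_Derive, Hf | lia | | rewrite <- Derive_n_S_Derive; exact Hpos|].
    { intros j Hjt. rewrite <- Derive_n_S_Derive. apply Hj. lia. }
    destruct (in_open_ball a b g Hg) as [d2 [Hd2 Hd2']].
    assert (HSq : 0 < INR (S q)) by (apply lt_0_INR; lia).
    exists (e1 / INR (S q)); split; [apply Rdiv_lt_0_compat; auto|].
    exists (Rmin d1 d2); split; [apply Rmin_pos; auto|].
    intros x Hx. pose proof (Rmin_l d1 d2). pose proof (Rmin_r d1 d2).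
    assert (Hf0 : f g = 0) by (apply (Hj 0%nat); lia).
    set (h := fun y => f y - e1 / INR (S q) * (y - g) ^ (S q)).
    enough (Hh : h g <= h x).
    { unfold h in Hh. rewrite Hf0, Rminus_eq_0, pow_i, Rmult_0_r in Hh by lia. lra. }
    apply (is_derive_nonneg_le h (fun y => Derive f y - e1 * (y - g) ^ q)); [lra| |].
    + intros y Hy. unfold h. auto_derive.
      * apply (Cn_ex_derive a b n f Hf), Hd2'. rewrite Rabs_right; lra.
      * change (match q with 0%nat => 1 | S _ => INR q + 1 end) with (INR (S q)).
        change (Derive (fun z => f z) y) with (Derive f y). unfold Rminus. field. lra.
    + intros y Hy. assert (e1 * (y - g) ^ q <= Derive f y) by (apply H1; lra). lra.
Qed.

Lemma right_lower_bound_abs_of_order (q n : nat) (f : R -> R) : Cn a b n f -> (q <= n)%nat ->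
  (forall j, (j < q)%nat -> Derive_n f j g = 0) -> Derive_n f q g <> 0 ->
  exists e, 0 < e /\ exists d, 0 < d /\
    forall x, g <= x < g + d -> e * (x - g) ^ q <= Rabs (f x).
Proof.
  intros Hf Hqn Hj Hne.
  destruct (Rlt_or_le 0 (Derive_n f q g)) as [Hp|Hm].
  - destruct (right_lower_bound_of_order q n f Hf Hqn Hj Hp) as [e [He [d [Hd H]]]].
    exists e; split; auto; exists d; split; auto. intros x Hx.
    apply Rle_trans with (f x); [apply H, Hx | apply Rle_abs].
  - destruct (right_lower_bound_of_order q n (fun x => - f x)) as [e [He [d [Hd H]]]]; auto.
    + apply (Cn_ext a b n (fun x => -1 * f x)); [intros; ring | apply Cn_scal, Hf].
    + intros j Hjq. rewrite Derive_n_opp, Hj; auto. ring.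
    + rewrite Derive_n_opp. lra.
    + exists e; split; auto; exists d; split; auto. intros x Hx.
      apply Rle_trans with (- f x); [apply H, Hx | rewrite <- Rabs_Ropp; apply Rle_abs].
Qed.

Lemma order_ge_of_right_bigO (q n s : nat) (f : R -> R) : Cn a b n f -> (q <= n)%nat ->
  (forall j, (j < q)%nat -> Derive_n f j g = 0) -> Derive_n f q g <> 0 ->
  (exists d, 0 < d /\ exists C, forall x, g < x < g + d -> Rabs (f x) <= C * (x - g) ^ s) ->
  (s <= q)%nat.
Proof.
  intros Hf Hqn Hj Hne [d [Hd [C HC]]].
  destruct (right_lower_bound_abs_of_order q n f Hf Hqn Hj Hne) as [e [He [d' [Hd' H]]]].
  destruct (Nat.le_gt_cases s q) as [Hle|Hgt]; auto. exfalso.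
  apply (pow_not_bigO_higher_pow e C (Rmin d d') q s He ltac:(apply Rmin_pos; lra) Hgt).
  intros x Hx. pose proof (Rmin_l d d'). pose proof (Rmin_r d d').
  replace x with (g + x - g) by ring.
  apply Rle_trans with (Rabs (f (g + x))); [apply H | apply HC]; lra.
Qed.

Lemma derivs_vanish_of_bigO (n s : nat) (f : R -> R) :
  Cn a b n f -> (s <= n)%nat -> bigO_at f g s -> forall j, (j < s)%nat -> Derive_n f j g = 0.
Proof.
  intros Hf Hs [d [Hd [C HC]]] j.
  induction j as [j IHj] using (well_founded_induction Wf_nat.lt_wf). intros Hjs.
  destruct (Req_dec (Derive_n f j g) 0) as [E|E]; auto. exfalso.
  enough (s <= j)%nat by lia.
  apply (order_ge_of_right_bigO j n s f Hf ltac:(lia)); auto.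
  - intros i Hi. apply IHj; lia.
  - exists d; split; auto. exists C. intros x Hx.
    rewrite <- (Rabs_right (x - g)) by lra. apply HC. rewrite Rabs_right; lra.
Qed.

End VanishingOrder.

(* [bigO_derivs g n s f]: the derivatives f, f', ..., f^(n) are O(|x - g|^s),
   O(|x - g|^(s-1)), ... (truncated subtraction).  Unlike the vanishing of the
   first s derivatives at g, this makes sense for s > n and survives products
   with functions that are only C^n. *)
Fixpoint bigO_derivs (g : R) (n s : nat) (f : R -> R) : Prop :=
  bigO_at f g s /\ match n with O => True | S n' => bigO_derivs g n' (s - 1) (Derive f) end.

Lemma bigO_derivs_bigO_at g n s f : bigO_derivs g n s f -> bigO_at f g s.
Proof. destruct n; simpl; tauto. Qed.

Lemma bigO_derivs_le_exp (g : R) (n : nat) : forall s s' f, (s' <= s)%nat ->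
  bigO_derivs g n s f -> bigO_derivs g n s' f.
Proof.
  induction n as [|n IH]; intros s s' f Hs [H1 H2];
    (split; [apply (bigO_at_le f g s); auto|]); auto.
  apply (IH (s - 1)%nat); auto. lia.
Qed.

Lemma bigO_derivs_S (g : R) (n : nat) : forall s f, bigO_derivs g (S n) s f -> bigO_derivs g n s f.
Proof. induction n as [|n IH]; intros s f [H1 H2]; split; auto. Qed.

Lemma bigO_derivs_le (g : R) (n n' s : nat) (f : R -> R) : (n <= n')%nat ->
  bigO_derivs g n' s f -> bigO_derivs g n s f.
Proof. induction 1 as [|n' _ IH]; auto. intros Hf; apply IH, bigO_derivs_S, Hf. Qed.

Section BigODerivs.

Variables (a b : Rbar) (g : R).
Hypothesis Hg : in_open a b g.

Lemma bigO_derivs_ext (n : nat) : forall s f h,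
  (forall x, in_open a b x -> f x = h x) -> bigO_derivs g n s f -> bigO_derivs g n s h.
Proof.
  induction n as [|n IH]; intros s f h Hfh [H1 H2];
    (split; [apply (bigO_at_ext a b g Hg f h s); auto|]); auto.
  apply (IH (s - 1)%nat (Derive f)); auto.
  intros x Hx. apply Derive_ext_loc, (locally_eq_in_open a b f h x Hfh Hx).
Qed.

Lemma bigO_derivs_plus (n : nat) : forall s f h, Cn a b n f -> Cn a b n h ->
  bigO_derivs g n s f -> bigO_derivs g n s h -> bigO_derivs g n s (fun x => f x + h x).
Proof.
  induction n as [|n IH]; intros s f h Hf Hh [F1 F2] [H1 H2];
    (split; [apply bigO_at_plus; auto|]); auto.
  apply (bigO_derivs_ext n _ (fun x => Derive f x + Derive h x)).
  - intros x Hx. rewrite Derive_plus; auto.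
    + apply (Cn_ex_derive a b n f Hf x Hx).
    + apply (Cn_ex_derive a b n h Hh x Hx).
  - apply IH; auto; apply Cn_Derive; auto.
Qed.

Lemma bigO_derivs_mult (n : nat) : forall s t f h, Cn a b n f -> Cn a b n h ->
  bigO_derivs g n s f -> bigO_derivs g n t h -> bigO_derivs g n (s + t) (fun x => f x * h x).
Proof.
  induction n as [|n IH]; intros s t f h Hf Hh Vf Vh.
  - split; [|exact I]. apply bigO_at_mult; eapply bigO_derivs_bigO_at; eauto.
  - split; [apply bigO_at_mult; eapply bigO_derivs_bigO_at; eauto|].
    pose proof (Cn_S a b n f Hf). pose proof (Cn_S a b n h Hh).
    pose proof (Cn_Derive a b n f Hf). pose proof (Cn_Derive a b n h Hh).
    apply (bigO_derivs_ext n _ (fun x => Derive f x * h x + f x * Derive h x)).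
    + intros x Hx. rewrite Derive_mult; auto.
      * apply (Cn_ex_derive a b n f Hf x Hx).
      * apply (Cn_ex_derive a b n h Hh x Hx).
    + apply bigO_derivs_plus; try apply Cn_mult; auto.
      * apply (bigO_derivs_le_exp g n (s - 1 + t)); [lia|].
        apply IH; auto; [apply (proj2 Vf) | apply bigO_derivs_S, Vh].
      * apply (bigO_derivs_le_exp g n (s + (t - 1))); [lia|].
        apply IH; auto; [apply bigO_derivs_S, Vf | apply (proj2 Vh)].
Qed.

Lemma bigO_derivs_of_derivs_vanish (n : nat) : forall s f, Cn a b n f -> (s <= n)%nat ->
  (forall j, (j < s)%nat -> Derive_n f j g = 0) -> bigO_derivs g n s f.
Proof.
  induction n as [|n IH]; intros s f Hf Hs Hj;
    (split; [apply (bigO_at_of_derivs_vanish a b g Hg s _ f Hf); auto|]); auto.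
  apply IH; [apply Cn_Derive, Hf | lia |].
  intros j Hjs. rewrite <- Derive_n_S_Derive. apply Hj. lia.
Qed.

Lemma bigO_derivs_0 (n : nat) f : Cn a b n f -> bigO_derivs g n 0 f.
Proof. intros Hf. apply bigO_derivs_of_derivs_vanish; auto; intros; lia. Qed.

Lemma bigO_derivs_scal (n s : nat) (c : R) f :
  Cn a b n f -> bigO_derivs g n s f -> bigO_derivs g n s (fun x => c * f x).
Proof.
  intros Hf Vf. apply (bigO_derivs_mult n 0 s (fun _ => c) f); auto;
    [apply Cn_const | apply bigO_derivs_0, Cn_const].
Qed.

End BigODerivs.

(** * Derivatives of a quotient *)

(* Away from the zeros of G, (M/G)^(i) = qnum M G i / G^(i+1). *)
Fixpoint qnum (M G : R -> R) (i : nat) : R -> R :=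
  match i with
  | O => M
  | S i' => fun x => G x * Derive (qnum M G i') x - INR (S i') * (Derive G x * qnum M G i' x)
  end.

Lemma is_derive_qnum_div (M G : R -> R) (i : nat) (x : R) :
  ex_derive (qnum M G i) x -> ex_derive G x -> G x <> 0 ->
  is_derive (fun y => qnum M G i y / G y ^ (S i)) x (qnum M G (S i) x / G x ^ (S (S i))).
Proof.
  intros HQ HG HG0.
  assert (H := is_derive_div (qnum M G i) (fun y => G y ^ (S i)) x _ _
     (Derive_correct _ _ HQ) (is_derive_pow G (S i) x _ (Derive_correct _ _ HG))
     (pow_nonzero _ _ HG0)).
  eapply is_derive_ext; [reflexivity|]. replace (qnum M G (S i) x / G x ^ S (S i)) with
    ((Derive (qnum M G i) x * G x ^ S i -
      qnum M G i x * (INR (S i) * Derive G x * G x ^ Init.Nat.pred (S i))) /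
       (G x ^ S i) ^ 2); auto.
  change (qnum M G (S i) x)
    with (G x * Derive (qnum M G i) x - INR (S i) * (Derive G x * qnum M G i x)).
  change (Init.Nat.pred (S i)) with i.
  assert (G x ^ i <> 0) by (apply pow_nonzero; auto).
  simpl pow. field. auto.
Qed.

Lemma locally_in_open_neq_0 (a b : Rbar) (f : R -> R) (x : R) : continuous f x ->
  in_open a b x -> f x <> 0 -> locally x (fun y => in_open a b y /\ f y <> 0).
Proof.
  intros Hf Hx Hfx.
  destruct (continuous_eps_delta f x Hf (Rabs (f x)) (Rabs_pos_lt _ Hfx)) as [d [Hd H]].
  destruct (in_open_ball a b x Hx) as [d2 [Hd2 H2]].
  exists (mkposreal _ (Rmin_pos d d2 Hd Hd2)). intros y Hy. change (Rabs (y - x) < Rmin d d2) in Hy.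
  pose proof (Rmin_l d d2). pose proof (Rmin_r d d2).
  split; [apply H2; lra|]. intro E. specialize (H y ltac:(lra)).
  rewrite E, Rminus_0_l, Rabs_Ropp in H. lra.
Qed.

Section QuotientNumerator.

Variables (a b : Rbar) (k : nat) (M G : R -> R).
Hypotheses (HM : Cn a b k M) (HG : Cn a b k G).

Lemma qnum_Cn (i : nat) : (i <= k)%nat -> Cn a b (k - i) (qnum M G i).
Proof.
  induction i as [|i IH]; intros Hi; [rewrite Nat.sub_0_r; exact HM|].
  assert (Hq := IH ltac:(lia)). replace (k - i)%nat with (S (k - S i)) in Hq by lia.
  assert (HG1 : Cn a b (S (k - S i)) G) by (apply (Cn_le a b _ k); [lia | exact HG]).
  apply Cn_minus.
  - apply Cn_mult; [apply Cn_S, HG1 | apply Cn_Derive, Hq].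
  - apply Cn_scal, Cn_mult; [apply Cn_Derive, HG1 | apply Cn_S, Hq].
Qed.

Lemma qnum_ex_derive (i : nat) (x : R) : (i < k)%nat -> in_open a b x ->
  ex_derive (qnum M G i) x.
Proof.
  intros Hi Hx. assert (C := qnum_Cn i ltac:(lia)).
  replace (k - i)%nat with (S (k - S i)) in C by lia.
  apply (Cn_ex_derive a b _ _ C x Hx).
Qed.

Lemma G_ex_derive (x : R) : (0 < k)%nat -> in_open a b x -> ex_derive G x.
Proof. intros Hk. apply (Cn_ex_derive a b 0 G), (Cn_le a b 1 k G Hk HG). Qed.

Lemma Derive_n_div_qnum (i : nat) : (i <= k)%nat -> forall x, in_open a b x -> G x <> 0 ->
  Derive_n (fun y => M y / G y) i x = qnum M G i x / G x ^ (S i).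
Proof.
  induction i as [|i IH]; intros Hi x Hx HG0; [simpl; field; auto|].
  simpl Derive_n at 1.
  rewrite (Derive_ext_loc _ (fun y => qnum M G i y / G y ^ (S i))).
  - apply is_derive_unique, is_derive_qnum_div; auto.
    + apply qnum_ex_derive; auto; lia.
    + apply G_ex_derive; auto; lia.
  - generalize (locally_in_open_neq_0 a b G x (Cn_continuous a b k G HG x Hx) Hx HG0).
    apply filter_imp. intros y [Hy1 Hy2]. apply IH; auto. lia.
Qed.

Lemma qnum_eq_of_Derive_n_div (m : nat) (F : R -> R) : (m <= k)%nat ->
  (forall h, in_open a b h -> G h <> 0 ->
     Derive_n (fun x => M x / G x) m h = F h / G h ^ (m + 1)) ->
  forall h, in_open a b h -> G h <> 0 -> F h = qnum M G m h.
Proof.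
  intros Hmk HD h Hh HGh. specialize (HD h Hh HGh).
  rewrite (Derive_n_div_qnum m Hmk h Hh HGh), Nat.add_1_r in HD.
  assert (G h ^ S m <> 0) by (apply pow_nonzero; auto).
  unfold Rdiv in HD. apply Rmult_eq_reg_r with (/ G h ^ S m); [congruence|].
  apply Rinv_neq_0_compat; auto.
Qed.

(* Rolle's theorem for qnum M G i / G^(i+1). *)
Lemma qnum_rolle (i : nat) (z z2 : R) : (i < k)%nat -> z < z2 ->
  (forall y, z <= y <= z2 -> in_open a b y /\ G y <> 0) ->
  qnum M G i z = 0 -> qnum M G i z2 = 0 -> exists w, z < w < z2 /\ qnum M G (S i) w = 0.
Proof.
  intros Hik Hzz Hin Hz Hz2.
  set (f := fun y => qnum M G i y / G y ^ (S i)).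
  assert (Hd : forall y, z <= y <= z2 ->
    is_derive f y (qnum M G (S i) y / G y ^ (S (S i)))).
  { intros y Hy. destruct (Hin y Hy) as [Hy1 Hy2]. apply is_derive_qnum_div; auto.
    - apply qnum_ex_derive; auto.
    - apply G_ex_derive; auto; lia. }
  assert (pr : forall y, z < y < z2 -> derivable_pt f y).
  { intros y Hy. apply ex_derive_Reals_0. eexists. apply Hd. lra. }
  destruct (Rolle f z z2 pr) as [c [Pc Hc]]; auto.
  - intros y Hy. apply ex_derive_continuity_pt. eexists. apply Hd; auto.
  - unfold f. rewrite Hz, Hz2. unfold Rdiv. ring.
  - exists c; split; auto. rewrite Derive_Reals in Hc.
    rewrite (is_derive_unique f c _ (Hd c ltac:(lra))) in Hc.
    destruct (Hin c ltac:(lra)) as [_ Gc].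
    assert (G c ^ S (S i) <> 0) by (apply pow_nonzero; auto).
    apply (Rmult_eq_compat_r (G c ^ S (S i))) in Hc. unfold Rdiv in Hc.
    rewrite Rmult_assoc, Rinv_l, Rmult_1_r, Rmult_0_l in Hc; auto.
Qed.

Section AtPoint.

Variable g : R.
Hypothesis Hg : in_open a b g.

(* No order is lost when G vanishes at g (e = 1), at most one otherwise (e = 0). *)
Lemma qnum_bigO_derivs_S (i e s : nat) : bigO_derivs g k e G -> (i < k)%nat ->
  bigO_derivs g (k - i) s (qnum M G i) -> bigO_derivs g (k - S i) (s + e - 1) (qnum M G (S i)).
Proof.
  intros VG Hik VQ.
  assert (CQ := qnum_Cn i ltac:(lia)).
  set (n := (k - S i)%nat) in *.
  replace (k - i)%nat with (S n) in CQ, VQ by (unfold n; lia).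
  assert (HG1 : Cn a b (S n) G) by (apply (Cn_le a b _ k); [unfold n; lia | exact HG]).
  assert (VG1 : bigO_derivs g (S n) e G) by (apply (bigO_derivs_le g _ k); auto; unfold n; lia).
  pose proof (Cn_S a b n G HG1) as CG. pose proof (Cn_Derive a b n G HG1) as CG'.
  pose proof (bigO_derivs_S g n e G VG1) as VG0. pose proof (proj2 VG1) as VG'.
  pose proof (Cn_Derive a b n _ CQ) as CQ'. pose proof (Cn_S a b n _ CQ) as CQ0.
  pose proof (proj2 VQ) as VQ'. pose proof (bigO_derivs_S g n _ _ VQ) as VQ0.
  apply (bigO_derivs_ext a b g Hg n _ (fun x => G x * Derive (qnum M G i) x +
     (- INR (S i)) * (Derive G x * qnum M G i x))).
  { intros x _. simpl. ring. }
  apply (bigO_derivs_plus a b g Hg); auto.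
  - apply Cn_mult; auto.
  - apply Cn_scal, Cn_mult; auto.
  - apply (bigO_derivs_le_exp g n (e + (s - 1))); [lia|].
    apply (bigO_derivs_mult a b g Hg); auto.
  - apply (bigO_derivs_scal a b g Hg); [apply Cn_mult; auto|].
    apply (bigO_derivs_le_exp g n (e - 1 + s)); [lia|]. apply (bigO_derivs_mult a b g Hg); auto.
Qed.

Lemma qnum_order_descent (i t : nat) : (i < k)%nat -> (2 <= t)%nat -> (t <= k - i)%nat ->
  (forall j, (j < t)%nat -> Derive_n (qnum M G i) j g = 0) ->
  forall j, (j < t - 1)%nat -> Derive_n (qnum M G (S i)) j g = 0.
Proof.
  intros Hik Ht Htk Hj.
  assert (VQ := bigO_derivs_of_derivs_vanish a b g Hg (k - i) t _ (qnum_Cn i ltac:(lia)) Htk Hj).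
  assert (V1 := qnum_bigO_derivs_S i 0 t (bigO_derivs_0 a b g Hg k G HG) Hik VQ).
  rewrite Nat.add_0_r in V1.
  apply (derivs_vanish_of_bigO a b g Hg (k - S i) (t - 1)).
  - apply qnum_Cn; lia.
  - lia.
  - apply (bigO_derivs_bigO_at g (k - S i)), V1.
Qed.

End AtPoint.

End QuotientNumerator.

(** * Counting zeros in finite lists *)

Definition sumL (f : R -> nat) (l : list R) : nat :=
  fold_right (fun x acc => (f x + acc)%nat) 0%nat l.

Definition asbool (P : R -> Prop) (x : R) : bool :=
  if excluded_middle_informative (P x) then true else false.

Definition sumP (P : R -> Prop) (f : R -> nat) (l : list R) : nat := sumL f (filter (asbool P) l).

Lemma asbool_true (P : R -> Prop) x : asbool P x = true <-> P x.
Proof.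
  unfold asbool. destruct (excluded_middle_informative (P x)); split; intros; auto;
    discriminate || contradiction.
Qed.

Lemma sumP_cons (P : R -> Prop) f x l :
  sumP P f (x :: l) = ((if excluded_middle_informative (P x) then f x else 0) + sumP P f l)%nat.
Proof.
  unfold sumP. simpl. unfold asbool at 1.
  destruct (excluded_middle_informative (P x)); reflexivity.
Qed.

Lemma sumP_split (P P1 P2 P3 : R -> Prop) f l :
  (forall x, P x <-> P1 x \/ P2 x \/ P3 x) ->
  (forall x, P1 x -> P2 x -> False) -> (forall x, P1 x -> P3 x -> False) ->
  (forall x, P2 x -> P3 x -> False) ->
  sumP P f l = (sumP P1 f l + sumP P2 f l + sumP P3 f l)%nat.
Proof.
  intros H H12 H13 H23. induction l as [|x l IH]; [reflexivity|].
  rewrite !sumP_cons, IH.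
  destruct (excluded_middle_informative (P x)), (excluded_middle_informative (P1 x)),
    (excluded_middle_informative (P2 x)), (excluded_middle_informative (P3 x));
    try lia; exfalso; firstorder.
Qed.

Lemma sumP_eq_notin (g : R) f l : ~ In g l -> sumP (fun x => x = g) f l = 0%nat.
Proof.
  induction l as [|x l IH]; intros Hin; [reflexivity|].
  rewrite sumP_cons. destruct (excluded_middle_informative (x = g)).
  - exfalso; apply Hin; left; auto.
  - rewrite IH; auto. intro; apply Hin; right; auto.
Qed.

Lemma sumP_eq_in (g : R) f l : NoDup l -> In g l -> sumP (fun x => x = g) f l = f g.
Proof.
  induction l as [|x l IH]; intros Hnd Hin; [destruct Hin|].
  inversion Hnd; subst. rewrite sumP_cons.
  destruct (excluded_middle_informative (x = g)) as [E|E].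
  - subst. rewrite sumP_eq_notin; auto; lia.
  - destruct Hin as [E'|Hin]; [contradiction | rewrite IH; auto].
Qed.

Lemma sumP_all (P : R -> Prop) f l : (forall x, In x l -> P x) -> sumP P f l = sumL f l.
Proof.
  induction l as [|x l IH]; intros H; [reflexivity|].
  rewrite sumP_cons. destruct (excluded_middle_informative (P x)) as [Hx|Hx].
  - simpl. rewrite IH; auto. intros; apply H; right; auto.
  - exfalso; apply Hx, H; left; auto.
Qed.

Lemma sumP_1_pos (P : R -> Prop) l :
  (0 < sumP P (fun _ => 1%nat) l)%nat -> exists x, In x l /\ P x.
Proof.
  induction l as [|x l IH]; intros H; [unfold sumP in H; simpl in H; lia|].
  rewrite sumP_cons in H. destruct (excluded_middle_informative (P x)).
  - exists x; split; auto; left; auto.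
  - destruct (IH H) as [y [Hy1 Hy2]]. exists y; split; auto; right; auto.
Qed.

Lemma sumP_1_eq_0 (P : R -> Prop) l x :
  sumP P (fun _ => 1%nat) l = 0%nat -> In x l -> ~ P x.
Proof.
  induction l as [|y l IH]; intros H Hin Hx; [destruct Hin|].
  rewrite sumP_cons in H. destruct (excluded_middle_informative (P y)); [lia|].
  destruct Hin as [E|Hin]; [subst; contradiction | apply (IH H Hin Hx)].
Qed.

Lemma sumL_perm f l l' : Permutation l l' -> sumL f l = sumL f l'.
Proof. induction 1; simpl; lia. Qed.

Lemma sumL_le (f h : R -> nat) l : (forall x, In x l -> (f x <= h x)%nat) ->
  (sumL f l <= sumL h l)%nat.
Proof.
  induction l as [|x l IH]; intros H; simpl; [lia|].
  assert (f x <= h x)%nat by (apply H; left; auto).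
  assert (sumL f l <= sumL h l)%nat by (apply IH; intros; apply H; right; auto). lia.
Qed.

Definition remove_R (x : R) (l : list R) : list R :=
  filter (fun y => if Req_EM_T y x then false else true) l.

Lemma remove_R_notin (x : R) l : ~ In x l -> remove_R x l = l.
Proof.
  unfold remove_R. induction l as [|z l IH]; intros H; auto.
  cbn -[Req_EM_T]. destruct (Req_EM_T z x).
  - subst; exfalso; apply H; left; auto.
  - rewrite IH; auto. intro; apply H; right; auto.
Qed.

Lemma sumL_remove_R f l x : NoDup l -> In x l -> sumL f l = (f x + sumL f (remove_R x l))%nat.
Proof.
  induction l as [|y l IH]; intros Hnd Hin; [destruct Hin|].
  inversion Hnd; subst. unfold remove_R; cbn -[Req_EM_T]. destruct (Req_EM_T y x) as [E|E].
  - subst. fold (remove_R x l). rewrite remove_R_notin; auto.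
  - destruct Hin as [E'|Hin]; [contradiction|].
    change (f y + sumL f l = f x + (f y + sumL f (remove_R x l)))%nat.
    rewrite (IH ltac:(assumption) Hin). lia.
Qed.


Lemma is_mult_unique (f : R -> R) (x : R) (l : nat) : is_mult f x l -> mult f x = l.
Proof.
  intros H. unfold mult.
  pose proof (epsilon_spec (inhabits 0%nat) (is_mult f x) (ex_intro _ l H)) as H2.
  set (l2 := epsilon _ _) in *.
  destruct H as [_ [H1 H3]], H2 as [_ [H4 H5]].
  destruct (Nat.lt_total l2 l) as [Hl|[Hl|Hl]]; auto.
  - exfalso; apply H5, H1, Hl.
  - exfalso; apply H3, H4, Hl.
Qed.

Lemma sumL_1 (l : list R) : sumL (fun _ => 1%nat) l = length l.
Proof. induction l; simpl; auto. Qed.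

Lemma length_le_sum_mult (f : R -> R) (Z : list R) :
  (forall x, In x Z -> exists l, is_mult f x l) -> (length Z <= sum_mult f Z)%nat.
Proof.
  intros H. rewrite <- sumL_1. apply sumL_le. intros x Hx. destruct (H x Hx) as [l Hl].
  rewrite (is_mult_unique _ _ _ Hl). apply Hl.
Qed.

Definition weight (L : list (R * nat)) : nat :=
  fold_right (fun p acc => (snd p + acc)%nat) 0%nat L.

Definition lt_fst (p q : R * nat) : Prop := fst p < fst q.

Lemma weight_le_sumL (f : R -> nat) : forall L Y, StronglySorted lt_fst L -> NoDup Y ->
  List.Forall (fun p => In (fst p) Y /\ (snd p <= f (fst p))%nat) L -> (weight L <= sumL f Y)%nat.
Proof.
  induction L as [|p L IH]; intros Y HL HY HF; simpl; [lia|].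
  apply StronglySorted_inv in HL as [HL Hp]. inversion HF as [|? ? [Hin Hle] HF']; subst.
  rewrite (sumL_remove_R f Y (fst p) HY Hin).
  enough (weight L <= sumL f (remove_R (fst p) Y))%nat by lia.
  apply IH; auto; [apply NoDup_filter, HY|].
  rewrite Forall_forall in *. intros q Hq. destruct (HF' q Hq) as [Hq1 Hq2]. split; auto.
  apply filter_In. split; auto. destruct (Req_EM_T (fst q) (fst p)); auto.
  specialize (Hp q Hq). unfold lt_fst in Hp. lra.
Qed.

Fixpoint insert_R (x : R) (l : list R) : list R :=
  match l with
  | nil => x :: nil
  | y :: l' => if Rlt_dec x y then x :: l else y :: insert_R x l'
  end.

Fixpoint sort_R (l : list R) : list R :=
  match l with nil => nil | x :: l' => insert_R x (sort_R l') end.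

Lemma insert_R_perm x l : Permutation (insert_R x l) (x :: l).
Proof.
  induction l as [|y l IH]; simpl; auto. destruct (Rlt_dec x y); auto.
  eapply perm_trans; [apply perm_skip, IH | apply perm_swap].
Qed.

Lemma sort_R_perm l : Permutation (sort_R l) l.
Proof.
  induction l as [|x l IH]; simpl; auto.
  eapply perm_trans; [apply insert_R_perm | apply perm_skip, IH].
Qed.

Lemma insert_R_sorted x : forall l, StronglySorted Rlt l -> ~ In x l ->
  StronglySorted Rlt (insert_R x l).
Proof.
  induction l as [|y l IH]; intros Hs Hin; simpl; [repeat constructor|].
  apply StronglySorted_inv in Hs as [Hs Hy]. destruct (Rlt_dec x y).
  - constructor; [constructor; auto|]. constructor; auto.
    rewrite Forall_forall in *. intros z Hz. specialize (Hy z Hz). lra.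
  - constructor; [apply IH; auto; intro; apply Hin; right; auto|].
    rewrite Forall_forall in *. intros z Hz.
    apply (Permutation_in _ (insert_R_perm x l)) in Hz. destruct Hz as [<-|Hz]; auto.
    assert (x <> y) by (intros ->; apply Hin; left; auto). lra.
Qed.

Lemma sort_R_sorted l : NoDup l -> StronglySorted Rlt (sort_R l).
Proof.
  induction l as [|x l IH]; intros Hnd; simpl; [constructor|]. inversion Hnd; subst.
  apply insert_R_sorted; auto. intro Hin.
  apply (Permutation_in _ (sort_R_perm l)) in Hin. contradiction.
Qed.

Lemma sorted_map_pair (h : R -> nat) l : StronglySorted Rlt l ->
  StronglySorted lt_fst (map (fun z => (z, h z)) l).
Proof.
  induction 1 as [|x l _ IH Hx]; simpl; constructor; auto.
  rewrite Forall_forall in *. intros q Hq. apply in_map_iff in Hq.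
  destruct Hq as [z [<- Hz]]. apply Hx, Hz.
Qed.

Lemma weight_map_pair (h : R -> nat) l : weight (map (fun z => (z, h z)) l) = sumL h l.
Proof. induction l; simpl; auto. Qed.

(** * Counting zeros through Rolle's theorem *)

(* [P i z t]: z is a zero of order at least t of the i-th function of a chain. *)
Section RolleCount.

Variable m : nat.
Variable P : nat -> R -> nat -> Prop.
Hypothesis P_descent :
  forall i z t, (i < m)%nat -> P i z t -> (2 <= t)%nat -> P (S i) z (t - 1).
Hypothesis P_rolle : forall i z t z2 t2, (i < m)%nat -> P i z t -> P i z2 t2 -> z < z2 ->
  exists w, z < w < z2 /\ P (S i) w 1.

Definition zeros_of (i : nat) (L : list (R * nat)) : Prop :=
  StronglySorted lt_fst L /\ List.Forall (fun p => P i (fst p) (snd p)) L.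

Lemma zeros_of_prepend (i : nat) (z : R) (t : nat) (L : list (R * nat)) :
  zeros_of (S i) L -> List.Forall (fun p => z < fst p) L ->
  ((2 <= t)%nat -> P (S i) z (t - 1)) ->
  exists L', zeros_of (S i) L' /\ (t + weight L <= weight L' + 1)%nat /\
    List.Forall (fun p => z <= fst p) L'.
Proof.
  intros [Hs Hv] Hz Hzt.
  assert (Hle : List.Forall (fun p => z <= fst p) L).
  { apply (Forall_impl _ (fun p Hp => Rlt_le _ _ Hp) Hz). }
  destruct (Compare_dec.le_lt_dec 2 t) as [Ht|Ht].
  - exists ((z, (t - 1)%nat) :: L). split; [split|split; [simpl; lia|]].
    + constructor; [exact Hs | exact Hz].
    + constructor; [apply Hzt, Ht | exact Hv].
    + constructor; [simpl; lra | exact Hle].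
  - exists L. repeat split; auto. lia.
Qed.

Lemma rolle_count_step (i : nat) : (i < m)%nat -> forall L, zeros_of i L ->
  exists L', zeros_of (S i) L' /\ (weight L <= weight L' + 1)%nat /\
    forall lo, List.Forall (fun p => lo <= fst p) L -> List.Forall (fun p => lo <= fst p) L'.
Proof.
  intros Hi L. induction L as [|[z t] L IH]; intros [Hs Hv].
  { exists nil. split; [split; constructor | split; [simpl; lia | constructor]]. }
  apply StronglySorted_inv in Hs as [Hs Hzs].
  inversion Hv as [|? ? Hzt Hv']; subst; simpl in Hzt.
  assert (Hdesc : (2 <= t)%nat -> P (S i) z (t - 1)) by (intros; apply P_descent; auto).
  destruct L as [|[z2 t2] L].
  - destruct (zeros_of_prepend i z t nil) as [L' [HL' [Hw Hlo]]];
      [repeat constructor | constructor | exact Hdesc|].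
    exists L'. split; [exact HL'|]. split; [simpl in *; lia|].
    intros lo Hlo0. inversion Hlo0 as [|? ? Hlz _]; simpl in Hlz.
    apply (Forall_impl _ (fun p Hp => Rle_trans lo z _ Hlz Hp) Hlo).
  - destruct (IH (conj Hs Hv')) as [L1 [[HL1s HL1v] [HL1w HL1lo]]].
    inversion Hzs as [|? ? Hzz _]; unfold lt_fst in Hzz; simpl in Hzz.
    inversion Hv' as [|? ? Hz2 _]; simpl in Hz2.
    destruct (P_rolle i z t z2 t2 Hi Hzt Hz2 Hzz) as [w [Hw Pw]].
    assert (Hge : List.Forall (fun p => z2 <= fst p) L1).
    { apply HL1lo. apply StronglySorted_inv in Hs as [_ Hs2]. constructor; [simpl; lra|].
      apply (Forall_impl _ (fun p (Hp : lt_fst (z2, t2) p) => Rlt_le _ _ Hp) Hs2). }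
    destruct (zeros_of_prepend i z t ((w, 1%nat) :: L1)) as [L' [HL' [Hw' Hlo]]];
      [split | | exact Hdesc|].
    + constructor; [exact HL1s|].
      apply (Forall_impl _ (fun p Hp => Rlt_le_trans w z2 _ (proj2 Hw) Hp) Hge).
    + constructor; [exact Pw | exact HL1v].
    + constructor; [simpl; lra|].
      apply (Forall_impl _ (fun p Hp => Rlt_le_trans z z2 _ Hzz Hp) Hge).
    + exists L'. split; [exact HL'|]. split; [simpl in *; lia|].
      intros lo Hlo0. inversion Hlo0 as [|? ? Hlz _]; simpl in Hlz.
      apply (Forall_impl _ (fun p Hp => Rle_trans lo z _ Hlz Hp) Hlo).
Qed.

Lemma rolle_count (L0 : list (R * nat)) : zeros_of 0 L0 ->
  exists L, zeros_of m L /\ (weight L0 <= weight L + m)%nat.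
Proof.
  intros H0.
  enough (Hi : forall i, (i <= m)%nat -> exists L, zeros_of i L /\ (weight L0 <= weight L + i)%nat)
    by apply Hi, le_n.
  induction i as [|i IH]; intros Hi; [exists L0; split; [exact H0 | lia]|].
  destruct (IH ltac:(lia)) as [L [HL Hw]].
  destruct (rolle_count_step i ltac:(lia) L HL) as [L' [HL' [Hw' _]]].
  exists L'. split; [exact HL' | lia].
Qed.

End RolleCount.

(** * Zeros of M, Ft and G *)

Section Bound.

Variables (alpha beta : Rbar) (k m : nat) (M G Ft : R -> R) (ZF ZG ZM : list R).
Hypotheses (HM : Cn alpha beta k M) (HG : Cn alpha beta k G) (HF : Cn alpha beta k Ft)
  (Hmk : (m <= k)%nat)
  (HQ : forall h, in_open alpha beta h -> G h <> 0 -> Ft h = qnum M G m h).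
Hypotheses (HZF : NoDup ZF) (HZFs : forall x, In x ZF <-> in_open alpha beta x /\ Ft x = 0)
  (HZG : NoDup ZG) (HZGs : forall x, In x ZG <-> in_open alpha beta x /\ G x = 0)
  (HZM : NoDup ZM) (HZMs : forall x, In x ZM -> in_open alpha beta x /\ M x = 0).
Hypotheses
  (HmM : forall x, in_open alpha beta x -> M x = 0 -> exists l, (l <= k)%nat /\ is_mult M x l)
  (HmG : forall x, in_open alpha beta x -> G x = 0 -> exists l, (l <= k)%nat /\ is_mult G x l)
  (HmF : forall x, in_open alpha beta x -> Ft x = 0 -> exists l, (l <= k)%nat /\ is_mult Ft x l).

(* Zeros of order at least t of qnum M G i in (a,b).  The derivatives of qnum M G i
   beyond order k - i need not exist, but order 1 only asks for a zero. *)
Definition qnum_zero (a b : Rbar) (i : nat) (z : R) (t : nat) : Prop :=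
  in_open a b z /\ (1 <= t <= Nat.max 1 (k - i))%nat /\
  forall j, (j < t)%nat -> Derive_n (qnum M G i) j z = 0.

Section GFree.

Variables a b : Rbar.
Hypothesis HJ : forall x, in_open a b x -> in_open alpha beta x /\ G x <> 0.

Lemma qnum_zero_descent (i : nat) (z : R) (t : nat) : (i < k)%nat ->
  qnum_zero a b i z t -> (2 <= t)%nat -> qnum_zero a b (S i) z (t - 1).
Proof.
  intros Hik [Hz [Ht Hder]] Ht2. split; [exact Hz | split; [lia|]].
  apply (qnum_order_descent alpha beta k M G HM HG z (proj1 (HJ z Hz)) i t); auto; lia.
Qed.

Lemma qnum_zero_rolle (i : nat) (z : R) (t : nat) (z2 : R) (t2 : nat) : (i < k)%nat ->
  qnum_zero a b i z t -> qnum_zero a b i z2 t2 -> z < z2 ->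
  exists w, z < w < z2 /\ qnum_zero a b (S i) w 1.
Proof.
  intros Hik [Hz [Ht Hder]] [Hz2 [Ht2 Hder2]] Hzz.
  destruct (qnum_rolle alpha beta k M G HM HG i z z2 Hik Hzz) as [w [Hw Qw]].
  - intros y Hy. apply HJ, (in_open_between a b z z2 y); auto.
  - apply (Hder 0%nat); lia.
  - apply (Hder2 0%nat); lia.
  - exists w. split; [exact Hw|]. split; [apply (in_open_between a b z z2 w); auto; lra|].
    split; [lia|]. intros j Hj. replace j with 0%nat by lia. exact Qw.
Qed.

Lemma zeros_of_M_in (Hab : forall x, in_open a b x -> in_open alpha beta x) :
  exists L0, zeros_of (qnum_zero a b) 0 L0 /\ weight L0 = sumP (in_open a b) (mult M) ZM.
Proof.
  exists (map (fun z => (z, mult M z)) (sort_R (filter (asbool (in_open a b)) ZM))).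
  split; [split|].
  - apply sorted_map_pair, sort_R_sorted, NoDup_filter, HZM.
  - apply Forall_forall. intros p Hp. apply in_map_iff in Hp as [z [<- Hz]].
    apply (Permutation_in _ (sort_R_perm _)), filter_In in Hz as [Hz1 Hz2].
    apply asbool_true in Hz2. destruct (HZMs z Hz1) as [Hz3 Hz4].
    destruct (HmM z Hz3 Hz4) as [l [Hl Hml]]. simpl. rewrite (is_mult_unique _ _ _ Hml).
    destruct Hml as [Hl1 [Hl2 _]]. split; [exact Hz2 | split; [lia | exact Hl2]].
  - rewrite weight_map_pair. apply sumL_perm, sort_R_perm.
Qed.

Lemma weight_le_sumP_Ft (L : list (R * nat)) : zeros_of (qnum_zero a b) m L ->
  (weight L <= sumP (in_open a b) (mult Ft) ZF)%nat.
Proof.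
  intros [Hs Hv]. apply weight_le_sumL; auto; [apply NoDup_filter, HZF|].
  rewrite Forall_forall in *. intros [z t] Hp. destruct (Hv _ Hp) as [Hz [Ht Hder]]. simpl in *.
  assert (Heq : forall j, Derive_n Ft j z = Derive_n (qnum M G m) j z).
  { intros j. apply Derive_n_ext_loc. apply (filter_imp _ _ (fun y Hy => HQ y (proj1 (HJ y Hy))
      (proj2 (HJ y Hy)))), in_open_locally, Hz. }
  assert (Fz : Ft z = 0) by (rewrite <- (Hder 0%nat) by lia; apply (Heq 0%nat)).
  destruct (HmF z (proj1 (HJ z Hz)) Fz) as [q [Hq Hmq]]. rewrite (is_mult_unique _ _ _ Hmq).
  split; [apply filter_In; split; [apply HZFs; split; auto; apply HJ, Hz | apply asbool_true, Hz]|].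
  destruct Hmq as [_ [_ Hq3]]. destruct (Nat.lt_ge_cases q t) as [Hlt|Hge]; auto.
  exfalso. apply Hq3. rewrite Heq. apply Hder, Hlt.
Qed.

Lemma sumP_mult_M_le_G_free :
  (sumP (in_open a b) (mult M) ZM <= sumP (in_open a b) (mult Ft) ZF + m)%nat.
Proof.
  destruct zeros_of_M_in as [L0 [HL0 HW0]]; [intros x Hx; apply HJ, Hx|].
  destruct (rolle_count m (qnum_zero a b)) with (L0 := L0) as [L [HL HW]]; auto.
  - intros i z t Hi. apply qnum_zero_descent; lia.
  - intros i z t z2 t2 Hi. apply qnum_zero_rolle; lia.
  - pose proof (weight_le_sumP_Ft L HL). lia.
Qed.

End GFree.

(* Ft = qnum M G m where G <> 0, in particular just right of g since G has finite
   order at g; and every qnum M G i inherits the order s of M at g when G g = 0. *)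
Lemma Ft_right_bigO_at_zero_of_G (g : R) (s : nat) : in_open alpha beta g -> G g = 0 ->
  (s <= k)%nat -> (forall j, (j < s)%nat -> Derive_n M j g = 0) ->
  exists d, 0 < d /\ exists C, forall x, g < x < g + d -> Rabs (Ft x) <= C * (x - g) ^ s.
Proof.
  intros Hg HGg Hs HMs.
  destruct (HmG g Hg HGg) as [r [Hr HGr]].
  assert (VG : bigO_derivs g k 1 G).
  { apply (bigO_derivs_of_derivs_vanish alpha beta g Hg); auto; [destruct HGr; lia|].
    intros j Hj. replace j with 0%nat by lia. exact HGg. }
  assert (VQ : forall i, (i <= m)%nat -> bigO_derivs g (k - i) s (qnum M G i)).
  { induction i as [|i IH]; intros Hi.
    - rewrite Nat.sub_0_r. apply (bigO_derivs_of_derivs_vanish alpha beta g Hg); auto.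
    - pose proof (qnum_bigO_derivs_S alpha beta k M G HM HG g Hg i 1 s VG ltac:(lia)
        (IH ltac:(lia))) as H.
      rewrite Nat.add_sub in H. exact H. }
  destruct (bigO_derivs_bigO_at _ _ _ _ (VQ m (le_n m))) as [d1 [Hd1 [C HC]]].
  destruct (right_lower_bound_abs_of_order alpha beta g Hg r k G HG Hr
    ltac:(apply HGr) ltac:(apply HGr)) as [e [He [d2 [Hd2 HLB]]]].
  destruct (in_open_ball alpha beta g Hg) as [d3 [Hd3 Hd3']].
  set (d := Rmin d1 (Rmin d2 d3)).
  pose proof (Rmin_l d1 (Rmin d2 d3)). pose proof (Rmin_r d1 (Rmin d2 d3)).
  pose proof (Rmin_l d2 d3). pose proof (Rmin_r d2 d3).
  exists d; split; [unfold d; repeat apply Rmin_pos; auto|]. exists C. intros x Hx.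
  assert (Hxin : in_open alpha beta x) by (apply Hd3'; rewrite Rabs_right; unfold d in *; lra).
  assert (HGx : G x <> 0).
  { intro E. assert (0 < e * (x - g) ^ r) by (apply Rmult_lt_0_compat; auto; apply pow_lt; lra).
    specialize (HLB x ltac:(unfold d in *; lra)). rewrite E, Rabs_R0 in HLB. lra. }
  rewrite HQ, <- (Rabs_right (x - g)) by (auto || lra). apply HC.
  rewrite Rabs_right; unfold d in *; lra.
Qed.

Lemma mult_M_le_mult_Ft_at_zero_of_G (g : R) : in_open alpha beta g -> G g = 0 -> M g = 0 ->
  Ft g = 0 /\ (mult M g <= mult Ft g)%nat.
Proof.
  intros Hg HGg HMg.
  destruct (HmM g Hg HMg) as [s [Hs HMs]]. rewrite (is_mult_unique _ _ _ HMs).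
  destruct HMs as [Hs1 [HMs _]].
  pose proof (Ft_right_bigO_at_zero_of_G g s Hg HGg Hs HMs) as Hbound.
  assert (HFg : Ft g = 0).
  { destruct (Req_dec (Ft g) 0) as [E|E]; auto.
    enough (s <= 0)%nat by lia.
    apply (order_ge_of_right_bigO alpha beta g Hg 0 k s Ft HF); auto; [lia | intros; lia]. }
  split; auto.
  destruct (HmF g Hg HFg) as [q [Hq HFq]]. rewrite (is_mult_unique _ _ _ HFq).
  apply (order_ge_of_right_bigO alpha beta g Hg q k s Ft HF); auto; apply HFq.
Qed.

(* Cut (a,b) at a zero g of G and recurse on the number of zeros of G. *)
Lemma sumP_mult_M_le (n : nat) : forall a b : Rbar,
  (forall x, in_open a b x -> in_open alpha beta x) ->
  (sumP (in_open a b) (fun _ => 1%nat) ZG <= n)%nat ->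
  (sumP (in_open a b) (mult M) ZM <=
     sumP (in_open a b) (mult Ft) ZF + m * sumP (in_open a b) (fun _ => 1%nat) ZG + m)%nat.
Proof.
  induction n as [|n IH]; intros a b Hsub Hcnt;
    (destruct (Nat.eq_dec (sumP (in_open a b) (fun _ => 1%nat) ZG) 0) as [E|E];
     [rewrite E, Nat.mul_0_r, Nat.add_0_r; apply sumP_mult_M_le_G_free;
      intros x Hx; split; auto; intro Gx;
      apply (sumP_1_eq_0 (in_open a b) ZG x E); auto; apply HZGs; auto|]); [lia|].
  destruct (sumP_1_pos (in_open a b) ZG ltac:(lia)) as [g [HgZ Hgab]].
  destruct (proj1 (HZGs g) HgZ) as [Hg HGg].
  assert (Sp : forall f l, sumP (in_open a b) f l = (sumP (in_open a g) f l +
      sumP (fun x => x = g) f l + sumP (in_open g b) f l)%nat).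
  { intros f l. apply sumP_split; [intros x; apply in_open_split, Hgab | ..];
      unfold in_open; intros x; simpl; intuition lra. }
  assert (Cg := Sp (fun _ => 1%nat) ZG). rewrite (sumP_eq_in g _ ZG HZG HgZ) in Cg.
  pose proof (IH a g (fun x Hx => Hsub x (proj2 (in_open_split a b g x Hgab) (or_introl Hx)))
    ltac:(lia)) as IH1.
  pose proof (IH g b (fun x Hx => Hsub x (proj2 (in_open_split a b g x Hgab)
    (or_intror (or_intror Hx)))) ltac:(lia)) as IH2.
  assert (Pt : (sumP (fun x => x = g) (mult M) ZM <= sumP (fun x => x = g) (mult Ft) ZF)%nat).
  { destruct (in_dec Req_EM_T g ZM) as [Hin|Hnin]; [|rewrite sumP_eq_notin; auto; lia].
    destruct (mult_M_le_mult_Ft_at_zero_of_G g Hg HGg (proj2 (HZMs g Hin))) as [HFg Hle].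
    rewrite !sumP_eq_in; auto. apply HZFs; auto. }
  rewrite (Sp (mult M) ZM), (Sp (mult Ft) ZF), Cg, !Nat.mul_add_distr_l. lia.
Qed.

Lemma sum_mult_M_le :
  (sum_mult M ZM <= sum_mult Ft ZF + m * length ZG + m)%nat.
Proof.
  pose proof (sumP_mult_M_le _ alpha beta (fun x Hx => Hx) (le_n _)) as H.
  rewrite !sumP_all, sumL_1 in H; auto; intros x Hx; [apply HZGs | apply HZFs | apply HZMs]; auto.
Qed.

End Bound.

Theorem theorem2p1 (k m : nat) (alpha beta : Rbar) (M G Ft : R -> R)
  (ZF ZG : list R) :
  (1 <= k)%nat -> (1 <= m)%nat -> (m <= k)%nat ->
  Rbar_lt alpha beta ->
  Ck_on k alpha beta M -> Ck_on k alpha beta G -> Ck_on k alpha beta Ft ->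
  (forall h, in_open alpha beta h -> G h <> 0 ->
     Derive_n (fun x => M x / G x) m h = Ft h / G h ^ (m + 1)) ->
  NoDup ZF -> (forall x, In x ZF <-> (in_open alpha beta x /\ Ft x = 0)) ->
  NoDup ZG -> (forall x, In x ZG <-> (in_open alpha beta x /\ G x = 0)) ->
  (forall x, in_open alpha beta x -> M x = 0 ->
     exists l, (l <= k)%nat /\ is_mult M x l) ->
  (forall x, in_open alpha beta x -> G x = 0 ->
     exists l, (l <= k)%nat /\ is_mult G x l) ->
  (forall x, in_open alpha beta x -> Ft x = 0 ->
     exists l, (l <= k)%nat /\ is_mult Ft x l) ->
  forall ZM : list R, NoDup ZM ->
    (forall x, In x ZM -> in_open alpha beta x /\ M x = 0) ->
    (sum_mult M ZM <= sum_mult Ft ZF + m * sum_mult G ZG + m)%nat.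
Proof.
  intros _ _ Hmk _ CM CG CF Hder HZF HZFs HZG HZGs HmM HmG HmF ZM HZM HZMs.
  pose proof (Ck_on_Cn alpha beta k M CM) as HM.
  pose proof (Ck_on_Cn alpha beta k G CG) as HG.
  pose proof (qnum_eq_of_Derive_n_div alpha beta k M G HM HG m Ft Hmk Hder) as HQ.
  pose proof (sum_mult_M_le alpha beta k m M G Ft ZF ZG ZM HM HG (Ck_on_Cn _ _ k Ft CF) Hmk HQ
    HZF HZFs HZG HZGs HZM HZMs HmM HmG HmF) as Hbound.
  assert (Hcount : (length ZG <= sum_mult G ZG)%nat).
  { apply length_le_sum_mult. intros x Hx. destruct (proj1 (HZGs x) Hx) as [Hx1 Hx2].
    destruct (HmG x Hx1 Hx2) as [l [_ Hl]]. exists l; exact Hl. }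
  pose proof (Nat.mul_le_mono_l _ _ m Hcount). lia.
Qed.
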